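(* Assume the standing conventions of the context. (i) If $m'=m+1$, $Z'$ is regular and $D_Z=\{Z'\}$, then $D_{Z'}=\{Z\}$. (ii) If $m'=m$, $Z$ is regular and $D_{Z'}=\{Z\}$, then $D_Z=\{Z'\}$.
   Context: A symbol is an array $\Lambda=\binom{a'_1,\ldots,a'_{m_1}}{b'_1,\ldots,b'_{m_2}}$ of two strictly decreasing finite sequences of nonnegative integers (top row, bottom row); its defect is $\mathrm{def}(\Lambda)=m_1-m_2$. Standing assumptions: $Z=\binom{a_1,\ldots,a_{m+1}}{b_1,\ldots,b_m}$ is a special symbol of defect $1$, i.e. $a_1\ge b_1\ge a_2\ge b_2\ge\cdots\ge b_m\ge a_{m+1}$; $Z'=\binom{c_1,\ldots,c_{m'}}{d_1,\ldots,d_{m'}}$ is a special symbol of defect $0$, i.e. $c_1\ge d_1\ge c_2\ge d_2\ge\cdots\ge c_{m'}\ge d_{m'}$; and $m'\in\{m,m+1\}$. For a symbol $Y$, $Y_{\mathrm I}$ is the set of entries of $Y$ occurring in exactly one row; $Y$ is regular if no entry occurs in both rows. For $M\subset Z_{\mathrm I}$, $\Lambda_M$ is the symbol obtained from $Z$ by moving every entry of $M$ to the other row (rows re-sorted decreasingly); for $N\subset Z'_{\mathrm I}$, $\Lambda_N$ is obtained from $Z'$ in the same way. $\overline{\mathcal S}_Z=\{\Lambda_M: M\subset Z_{\mathrm I}\}$, $\overline{\mathcal S}_{Z'}=\{\Lambda_N:N\subset Z'_{\mathrm I}\}$; $\mathcal S_{Z,1}$ (resp. $\mathcal S_{Z',0}$)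 is the set of elements of $\overline{\mathcal S}_Z$ of defect $1$ (resp. of $\overline{\mathcal S}_{Z'}$ of defect $0$). Relation $\overline{\mathcal B}^+_{Z,Z'}\subset\overline{\mathcal S}_Z\times\overline{\mathcal S}_{Z'}$: for $\Lambda=\binom{a'_1,\ldots,a'_{m_1}}{b'_1,\ldots,b'_{m_2}}\in\overline{\mathcal S}_Z$ and $\Lambda'=\binom{c'_1,\ldots,c'_{m'_1}}{d'_1,\ldots,d'_{m'_2}}\in\overline{\mathcal S}_{Z'}$, $(\Lambda,\Lambda')\in\overline{\mathcal B}^+_{Z,Z'}$ iff $\mathrm{def}(\Lambda')=1-\mathrm{def}(\Lambda)$ and: if $m'=m$, $a'_i>d'_i\ge a'_{i+1}$ for $1\le i\le m'_2$ and $b'_{i-1}>c'_i\ge b'_i$ for $1\le i\le m'_1$; if $m'=m+1$, $a'_i\ge d'_i>a'_{i+1}$ for $1\le i\le m'_2$ and $b'_{i-1}\ge c'_i>b'_i$ for $1\le i\le m'_1$; here $b'_0=+\infty$ and nonexistent entries $a'_j,b'_j$ beyond the row lengths are $-\infty$. Then $\mathcal D_{Z,Z'}=\overline{\mathcal B}^+_{Z,Z'}\cap(\mathcal S_{Z,1}\times\mathcal S_{Z',0})$, $D_Z=\{\Lambda'\mid (Z,\Lambda')\in\mathcal D_{Z,Z'}\}$ and $D_{Z'}=\{\Lambda\mid(\Lambda,Z')\in\mathcal D_{Z,Z'}\}$. *)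

From mathcomp Require Import all_boot all_order all_algebra.
Set Implicit Arguments. Unset Strict Implicit. Unset Printing Implicit Defensive.

(* A symbol: (top row, bottom row), each row a strictly decreasing list of nats. *)
Definition symbol := (seq nat * seq nat)%type.

Definition is_symbol (L : symbol) : Prop :=
  sorted (fun x y => y < x) L.1 /\ sorted (fun x y => y < x) L.2.

Definition defect (L : symbol) : int := ((size L.1)%:Z - (size L.2)%:Z)%R.

(* Z = (a_1..a_{m+1} ; b_1..b_m) special of defect 1 (0-indexed lists). *)
Definition special1 (m : nat) (Z : symbol) : Prop :=
  is_symbol Z /\ size Z.1 = m.+1 /\ size Z.2 = m /\
  (forall i, i < m -> nth 0 Z.2 i <= nth 0 Z.1 i /\ nth 0 Z.1 i.+1 <= nth 0 Z.2 i).

Definition special0 (m' : nat) (Z' : symbol) : Prop :=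
  is_symbol Z' /\ size Z'.1 = m' /\ size Z'.2 = m' /\
  (forall i, i < m' -> nth 0 Z'.2 i <= nth 0 Z'.1 i) /\
  (forall i, i.+1 < m' -> nth 0 Z'.1 i.+1 <= nth 0 Z'.2 i).

(* x occurs in exactly one row, i.e. x \in Y_I *)
Definition in_single (Y : symbol) (x : nat) : bool := (x \in Y.1) != (x \in Y.2).

Definition regular (Y : symbol) : Prop := forall x, ~~ ((x \in Y.1) && (x \in Y.2)).

Definition move_entries (Y : symbol) (M : seq nat) : symbol :=
  (sort geq ([seq x <- Y.1 | x \notin M] ++ [seq x <- Y.2 | x \in M]),
   sort geq ([seq x <- Y.2 | x \notin M] ++ [seq x <- Y.1 | x \in M])).

Definition in_Sbar (Y L : symbol) : Prop :=
  exists M : seq nat, all (in_single Y) M /\ L = move_entries Y M.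

Inductive ext := NegInf | Fin of nat | PosInf.

Definition ext_le (x y : ext) : bool :=
  match x, y with
  | NegInf, _ => true
  | _, PosInf => true
  | Fin a, Fin b => a <= b
  | _, _ => false
  end.
Definition ext_lt (x y : ext) : bool := ~~ ext_le y x.

Definition entry (s : seq nat) (j : nat) : ext :=
  if j < size s then Fin (nth 0 s j) else NegInf.

(* b'_{j} in the paper's 1-indexed convention with b'_0 = +oo *)
Definition entry1 (s : seq nat) (j : nat) : ext :=
  if j is j'.+1 then entry s j' else PosInf.

(* The relation Bbar^+_{Z,Z'}; m, m' are the parameters of Z, Z'.
   Indices are shifted to 0-based: paper's a'_i = entry A (i-1), etc. *)
Definition Bplus (m m' : nat) (L L' : symbol) : Prop :=
  let A := L.1 in let B := L.2 in let C := L'.1 in let D := L'.2 in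
  (defect L' = 1 - defect L)%R /\
  if m' == m then
    (forall j, j < size D ->
       ext_lt (Fin (nth 0 D j)) (entry A j) /\ ext_le (entry A j.+1) (Fin (nth 0 D j))) /\
    (forall j, j < size C ->
       ext_lt (Fin (nth 0 C j)) (entry1 B j) /\ ext_le (entry B j) (Fin (nth 0 C j)))
  else
    (forall j, j < size D ->
       ext_le (Fin (nth 0 D j)) (entry A j) /\ ext_lt (entry A j.+1) (Fin (nth 0 D j))) /\
    (forall j, j < size C ->
       ext_le (Fin (nth 0 C j)) (entry1 B j) /\ ext_lt (entry B j) (Fin (nth 0 C j))).

(* D_{Z,Z'} = Bplus intersected with S_{Z,1} x S_{Z',0} *)
Definition inD (m m' : nat) (Z Z' L L' : symbol) : Prop :=
  Bplus m m' L L' /\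
  (in_Sbar Z L /\ (defect L = 1)%R) /\ (in_Sbar Z' L' /\ (defect L' = 0)%R).

From mathcomp Require Import all_boot all_order all_algebra zify.
Set Implicit Arguments. Unset Strict Implicit. Unset Printing Implicit Defensive.

(* Call the symbol that is
   assumed to have a unique partner the pivot and the other one the mover
   (Z and Z' in part (i), Z' and Z in part (ii)); the mover is regular.

   1. Swapping one top entry with one bottom entry of a regular symbol, in
      place, gives again an element of its class Sbar (swap_in_Sbar), of the
      same defect, and a different symbol (swap_changes).
   2. Uniqueness of the pivot's partner therefore forbids every swap of the
      mover that keeps the interlacing inequalities of Bbar^+.  Each
      non-strict inequality between pivot and mover would allow such a swap;
      alternating two kinds of swaps downwards from the last index shows that
      the pivot lies strictly below the mover (Z_below_Z', Z'_below_Z).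
   3. Rigidity: once the interlacing is strict, the windows cut out by the
      mover contain exactly one admissible entry each, so the only element of
      the pivot's class interlacing with the mover is the pivot itself. *)

Local Notation decreasing s := (sorted (fun x y : nat => y < x) s).

Lemma gtn_trans : transitive (fun x y : nat => y < x).
Proof. by move=> a b c h1 h2; apply: ltn_trans h2 h1. Qed.

Lemma decreasing_lt s i j : decreasing s -> i < j -> j < size s ->
  nth 0 s j < nth 0 s i.
Proof.
move=> ds ij js; apply: (sorted_ltn_nth gtn_trans 0 ds) => //.
by rewrite inE (ltn_trans ij js).
Qed.

Lemma decreasing_le s i j : decreasing s -> i <= j -> j < size s ->
  nth 0 s j <= nth 0 s i.
Proof.
move=> ds; rewrite leq_eqVlt => /orP [/eqP -> //|ij js].
exact/ltnW/decreasing_lt.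
Qed.

Lemma decreasing_uniq s : decreasing s -> uniq s.
Proof. by move=> ds; rewrite gtn_sorted_uniq_geq in ds; case/andP: ds. Qed.

Lemma size_set_nth_in (s : seq nat) k v : k < size s ->
  size (set_nth 0 s k v) = size s.
Proof. by move=> ks; rewrite size_set_nth (maxn_idPr ks). Qed.

Lemma decreasing_set_nth s k v : decreasing s -> k < size s ->
  (0 < k -> v < nth 0 s k.-1) -> (k.+1 < size s -> nth 0 s k.+1 < v) ->
  decreasing (set_nth 0 s k v).
Proof.
move=> ds ks lo hi; apply/(sortedP 0) => i.
rewrite size_set_nth_in // => isz.
have := (sortedP 0 ds) i isz; rewrite !nth_set_nth /=.
case: (i =P k) => [ik|ik]; case: (i.+1 =P k) => [ik'|ik'] //.
- lia.
- by move=> _; rewrite ik; apply: hi; rewrite -ik.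
- by move=> _; rewrite -ik' /= in lo; apply: lo.
Qed.

Lemma mem_set_nth_uniq (s : seq nat) k v x : uniq s -> k < size s ->
  (x \in set_nth 0 s k v) = (x == v) || ((x \in s) && (x != nth 0 s k)).
Proof.
move=> us ks.
have ds : s = take k s ++ nth 0 s k :: drop k.+1 s
  by rewrite -drop_nth // cat_take_drop.
have : uniq (take k s ++ nth 0 s k :: drop k.+1 s) by rewrite -ds.
rewrite cat_uniq /= => /and3P [_ /norP [h1 _] /andP [h2 _]].
rewrite set_nthE ks {3}ds !mem_cat !inE.
case: (x =P nth 0 s k) => [->|_].
  by rewrite (negbTE h1) (negbTE h2) andbF !orbF.
by rewrite andbT; case: (x \in take k s); case: (x == v); case: (x \in drop _ _).
Qed.

(* Moving u = s_k out of the row s and v = t_l into it (u not in t, v not in s)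
   and re-sorting is the same as overwriting s_k by v, provided the result
   is decreasing. *)
Lemma moved_row (s t M : seq nat) k l :
  decreasing s -> decreasing t -> k < size s -> l < size t ->
  nth 0 s k \notin t -> nth 0 t l \notin s ->
  M =i [:: nth 0 s k; nth 0 t l] ->
  decreasing (set_nth 0 s k (nth 0 t l)) ->
  sort geq ([seq x <- s | x \notin M] ++ [seq x <- t | x \in M]) =
  set_nth 0 s k (nth 0 t l).
Proof.
move=> ds dt ks lt ut vs eM dr.
have geq_trans : transitive geq by move=> a b c h h'; apply: leq_trans h' h.
have geq_anti : antisymmetric geq.
  by move=> a b h; apply/eqP; rewrite eqn_leq andbC.
apply: (sorted_eq geq_trans geq_anti).
- by apply: sort_sorted => x y; apply: leq_total.
- by apply: sub_sorted dr => a b /ltnW.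
rewrite perm_sort; apply: uniq_perm.
- rewrite cat_uniq !filter_uniq ?decreasing_uniq //= andbT.
  by apply/hasPn => x; rewrite !mem_filter => /andP [-> _].
- exact: decreasing_uniq.
move=> x; rewrite mem_set_nth_uniq ?decreasing_uniq // mem_cat !mem_filter !eM !inE.
have uY : nth 0 s k \in s by apply: mem_nth.
have vY : nth 0 t l \in t by apply: mem_nth.
case: (x =P nth 0 t l) => [->|_]; first by rewrite vY (negbTE vs) orbT.
case: (x =P nth 0 s k) => [->|_] /=; last by rewrite orbF andbT.
by rewrite andbF (negbTE ut).
Qed.

Definition swap_entries (Y : symbol) (k l : nat) : symbol :=
  (set_nth 0 Y.1 k (nth 0 Y.2 l), set_nth 0 Y.2 l (nth 0 Y.1 k)).

Lemma regular_nth_neq (Y : symbol) i j : regular Y ->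
  i < size Y.1 -> j < size Y.2 -> nth 0 Y.1 i != nth 0 Y.2 j.
Proof.
move=> reg i1 j2; apply/eqP => e; have := reg (nth 0 Y.1 i).
by rewrite mem_nth // e mem_nth.
Qed.

Lemma regular_notin1 (Y : symbol) i : regular Y -> i < size Y.1 ->
  nth 0 Y.1 i \notin Y.2.
Proof. by move=> reg i1; have := reg (nth 0 Y.1 i); rewrite mem_nth. Qed.

Lemma regular_notin2 (Y : symbol) j : regular Y -> j < size Y.2 ->
  nth 0 Y.2 j \notin Y.1.
Proof. by move=> reg j2; have := reg (nth 0 Y.2 j); rewrite mem_nth // andbT. Qed.

Lemma swap_in_Sbar (Y : symbol) k l : is_symbol Y -> regular Y ->
  k < size Y.1 -> l < size Y.2 ->
  decreasing (swap_entries Y k l).1 -> decreasing (swap_entries Y k l).2 ->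
  in_Sbar Y (swap_entries Y k l).
Proof.
case: Y => [s t] [/= ds dt] reg ks lt d1 d2.
have ut := regular_notin1 reg ks; have vs := regular_notin2 reg lt.
rewrite /= in ut vs.
exists [:: nth 0 s k; nth 0 t l]; split.
  by rewrite /= /in_single /= !mem_nth //= (negbTE ut) (negbTE vs).
rewrite /move_entries /swap_entries /=; congr pair; apply/esym.
  exact: moved_row.
by apply: moved_row => // x; rewrite !inE orbC.
Qed.

Lemma defect_swap (Y : symbol) k l : k < size Y.1 -> l < size Y.2 ->
  defect (swap_entries Y k l) = defect Y.
Proof.
by move=> k1 l2; rewrite /defect /= !size_set_nth_in.
Qed.

Lemma swap_changes (Y : symbol) k l : regular Y ->
  k < size Y.1 -> l < size Y.2 -> swap_entries Y k l <> Y.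
Proof.
move=> reg ks lt /(congr1 (fun L : symbol => nth 0 L.1 k)) /=.
by rewrite nth_set_nth /= eqxx => /eqP; rewrite eq_sym (negbTE (regular_nth_neq reg ks lt)).
Qed.

Lemma Sbar_mem (Y L : symbol) : in_Sbar Y L ->
  forall x, x \in L.1 ++ L.2 -> x \in Y.1 ++ Y.2.
Proof.
case=> M [_ ->] x; rewrite /move_entries /= !mem_cat !mem_sort !mem_cat !mem_filter.
by case: (x \in M); case: (x \in Y.1); case: (x \in Y.2).
Qed.

Lemma Sbar_both (Y L : symbol) : in_Sbar Y L ->
  forall x, x \in L.1 -> x \in L.2 -> x \in Y.1 /\ x \in Y.2.
Proof.
case=> M [_ ->] x; rewrite /move_entries /= !mem_sort !mem_cat !mem_filter.
by case: (x \in M); case: (x \in Y.1); case: (x \in Y.2).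
Qed.

Lemma Sbar_shape (Y L : symbol) : in_Sbar Y L -> defect L = defect Y ->
  size L.1 = size Y.1 /\ size L.2 = size Y.2.
Proof.
case=> M [_ ->]; rewrite /defect /move_entries /= !size_sort !size_cat !size_filter.
have count_split (s : seq nat) :
    count (fun x : nat => x \notin M) s + count (fun x : nat => x \in M) s = size s.
  by rewrite addnC; apply: count_predC.
have c1 := count_split Y.1; have c2 := count_split Y.2.
set a := count (fun x : nat => x \notin M) Y.1 in c1 *.
set b := count (fun x : nat => x \in M) Y.1 in c1 *.
set c := count (fun x : nat => x \notin M) Y.2 in c2 *.
set d := count (fun x : nat => x \in M) Y.2 in c2 *.
move=> e; lia.
Qed.

Lemma le_fin_entry a s j : ext_le (Fin a) (entry s j) = (j < size s) && (a <= nth 0 s j).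
Proof. by rewrite /entry; case: ifP. Qed.

Lemma lt_fin_entry a s j : ext_lt (Fin a) (entry s j) = (j < size s) && (a < nth 0 s j).
Proof. by rewrite /entry /ext_lt; case: ifP => //= _; rewrite ltnNge. Qed.

Lemma le_entry_fin a s j : ext_le (entry s j) (Fin a) = (j < size s) ==> (nth 0 s j <= a).
Proof. by rewrite /entry; case: ifP. Qed.

Lemma lt_entry_fin a s j : ext_lt (entry s j) (Fin a) = (j < size s) ==> (nth 0 s j < a).
Proof. by rewrite /entry /ext_lt; case: ifP => //= _; rewrite ltnNge. Qed.

(* From now on comparisons are only rewritten with the four lemmas above. *)
Arguments ext_le : simpl never.
Arguments ext_lt : simpl never.
Arguments entry : simpl never.

Definition interlaced_succ (m : nat) (A B C D : seq nat) : Prop :=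
  [/\ forall j, j <= m -> nth 0 D j <= nth 0 A j,
      forall j, j < m -> nth 0 A j.+1 < nth 0 D j,
      forall j, j < m -> nth 0 C j.+1 <= nth 0 B j &
      forall j, j < m -> nth 0 B j < nth 0 C j].

Definition interlaced_eq (m : nat) (A B C D : seq nat) : Prop :=
  [/\ forall j, j < m -> nth 0 D j < nth 0 A j,
      forall j, j < m -> nth 0 A j.+1 <= nth 0 D j,
      forall j, j.+1 < m -> nth 0 C j.+1 < nth 0 B j &
      forall j, j < m -> nth 0 B j <= nth 0 C j].

Lemma Bplus_succE m A B C D :
  size A = m.+1 -> size B = m -> size C = m.+1 -> size D = m.+1 ->
  Bplus m m.+1 (A, B) (C, D) <-> interlaced_succ m A B C D.
Proof.
move=> zA zB zC zD; rewrite /Bplus /defect /= zA zB zC zD (gtn_eqF (ltnSn m)).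
have -> : (1 - (m.+1%:Z - m%:Z) = m.+1%:Z - m.+1%:Z)%R by lia.
split=> [[_ [hD hC]]|[hDA hAD hCB hBC]].
- split=> j jm.
  + by have [+ _] := hD j ltac:(lia); rewrite le_fin_entry => /andP [].
  + by have [_ +] := hD j ltac:(lia); rewrite lt_entry_fin zA ltnS jm.
  + by have [+ _] := hC j.+1 ltac:(lia); rewrite /= le_fin_entry => /andP [].
  + by have [_ +] := hC j ltac:(lia); rewrite lt_entry_fin zB jm.
- split=> //; split=> j; rewrite ?zC ?zD ltnS => jm.
  + rewrite le_fin_entry lt_entry_fin zA ltnS jm (hDA j jm); split=> //.
    by apply/implyP; rewrite ltnS => /hAD.
  + rewrite lt_entry_fin zB; split; last by apply/implyP => /hBC.
    by case: j jm => [|j] //= jm; rewrite le_fin_entry zB jm (hCB j jm).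
Qed.

Lemma Bplus_eqE m A B C D :
  size A = m.+1 -> size B = m -> size C = m -> size D = m ->
  Bplus m m (A, B) (C, D) <-> interlaced_eq m A B C D.
Proof.
move=> zA zB zC zD; rewrite /Bplus /defect /= zA zB zC zD eqxx.
have -> : (1 - (m.+1%:Z - m%:Z) = m%:Z - m%:Z)%R by lia.
split=> [[_ [hD hC]]|[hDA hAD hCB hBC]].
- split=> j jm.
  + by have [+ _] := hD j ltac:(lia); rewrite lt_fin_entry => /andP [].
  + by have [_ +] := hD j ltac:(lia); rewrite le_entry_fin zA ltnS jm.
  + by have [+ _] := hC j.+1 ltac:(lia); rewrite /= lt_fin_entry => /andP [].
  + by have [_ +] := hC j ltac:(lia); rewrite le_entry_fin zB jm.
- split=> //; split=> j; rewrite ?zC ?zD => jm.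
  + rewrite lt_fin_entry le_entry_fin zA ltnS (ltnW jm) (hDA j jm).
    by split=> //; apply/implyP => _; apply: hAD.
  + rewrite le_entry_fin zB jm (hBC j jm); split=> //.
    by case: j jm => [|j] //= jm; rewrite lt_fin_entry zB (ltnW jm) (hCB j jm).
Qed.

(* Let P, Q be the rows of a symbol and X1, X2 those of a second
   one, strictly interlaced as in P_between and Q_between, and consider the
   windows  W_j = [X2_j, X2_(j-1))  and  V_j = [X1_(j+1), X1_j).  A symbol
   (P', Q') with P'_j in W_j and Q'_j in V_j, all of whose entries come from
   (P, Q) (double entries only from double entries), is (P, Q) itself. *)
Section Rigidity.
Variables P Q X1 X2 : seq nat.
Hypotheses (dP : decreasing P) (dQ : decreasing Q) (dX1 : decreasing X1).
Hypotheses (sQP : size Q <= size P) (sPQ : size P <= (size Q).+1).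
Hypotheses (sPX2 : size P <= size X2) (sQX1 : (size Q).+1 <= size X1).
Hypothesis P_between : forall j, j < size P ->
  nth 0 P j < nth 0 X1 j /\ nth 0 X2 j <= nth 0 P j.
Hypothesis Q_between : forall j, j < size Q ->
  nth 0 Q j < nth 0 X2 j /\ nth 0 X1 j.+1 <= nth 0 Q j.

Lemma P_in_window i j : i < size P -> j < size P ->
  nth 0 X2 j <= nth 0 P i -> (0 < j -> nth 0 P i < nth 0 X2 j.-1) -> i = j.
Proof.
move=> ip jp lo hi; case: (ltngtP i j) => // ij.
- have := decreasing_le dP (i:=i) (j:=j.-1) ltac:(lia) ltac:(lia).
  have [_ +] := P_between (j := j.-1) ltac:(lia).
  have := hi ltac:(lia); lia.
- have := decreasing_le dP (i:=j.+1) (j:=i) ltac:(lia) ltac:(lia).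
  have [+ _] := P_between (j := j.+1) ltac:(lia).
  have := Q_between (j := j) ltac:(lia); lia.
Qed.

Lemma Q_in_window i j : i < size Q -> j < size P ->
  nth 0 X2 j <= nth 0 Q i -> (0 < j -> nth 0 Q i < nth 0 X2 j.-1) -> i.+1 = j.
Proof.
move=> iq jp lo hi; case: (ltngtP i.+1 j) => // ij.
- have [_ +] := Q_between (j := i) iq.
  have := decreasing_le dX1 (i:=i.+1) (j:=j.-1) ltac:(lia) ltac:(lia).
  have := P_between (j := j.-1) ltac:(lia).
  have := hi ltac:(lia); lia.
- have := decreasing_le dQ (i:=j) (j:=i) ltac:(lia) ltac:(lia).
  have := Q_between (j := j) ltac:(lia); lia.
Qed.

Lemma Q_in_cowindow i j : i < size Q -> j < size Q ->
  nth 0 X1 j.+1 <= nth 0 Q i -> nth 0 Q i < nth 0 X1 j -> i = j.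
Proof.
move=> iq jq lo hi; case: (ltngtP i j) => // ij.
- case: j jq lo hi ij => [|j] // jq lo hi ij.
  have := decreasing_le dQ (i:=i) (j:=j) ltac:(lia) ltac:(lia).
  have := Q_between (j := j) ltac:(lia); lia.
- have := decreasing_le dQ (i:=j.+1) (j:=i) ltac:(lia) ltac:(lia).
  have := Q_between (j := j.+1) ltac:(lia).
  have := P_between (j := j.+1) ltac:(lia); lia.
Qed.

Lemma P_in_cowindow i j : i < size P -> j < size Q ->
  nth 0 X1 j.+1 <= nth 0 P i -> nth 0 P i < nth 0 X1 j -> i = j.
Proof.
move=> ip jq lo hi; case: (ltngtP i j) => // ij.
- have := P_between (j := i) ip; have := Q_between (j := i) ltac:(lia).
  have := decreasing_le dX1 (i:=i.+1) (j:=j) ltac:(lia) ltac:(lia); lia.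
- have := P_between (j := i) ip.
  have := decreasing_le dX1 (i:=j.+1) (j:=i) ltac:(lia) ltac:(lia); lia.
Qed.

Lemma rigidity P' Q' :
  size P' = size P -> size Q' = size Q ->
  (forall j, j < size P ->
     nth 0 X2 j <= nth 0 P' j /\ (0 < j -> nth 0 P' j < nth 0 X2 j.-1)) ->
  (forall j, j < size Q ->
     nth 0 X1 j.+1 <= nth 0 Q' j /\ nth 0 Q' j < nth 0 X1 j) ->
  (forall x, x \in P' ++ Q' -> x \in P ++ Q) ->
  (forall x, x \in P' -> x \in Q' -> x \in P /\ x \in Q) ->
  P' = P /\ Q' = Q.
Proof.
move=> eP eQ P'_win Q'_win sub both.
have inP j : j < size P -> nth 0 P' j \in P -> nth 0 P' j = nth 0 P j.
  move=> jp /(nthP 0) [i ip ei]; have [lo hi] := P'_win j jp.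
  by rewrite -ei (P_in_window ip jp) // ei.
have inQ j : j < size Q -> nth 0 Q' j \in Q -> nth 0 Q' j = nth 0 Q j.
  move=> jq /(nthP 0) [i iq ei]; have [lo hi] := Q'_win j jq.
  by rewrite -ei (Q_in_cowindow iq jq) // ei.
have P'_mem j : j < size P -> nth 0 P' j \in P' by move=> jp; rewrite mem_nth ?eP.
have Q'_mem j : j < size Q -> nth 0 Q' j \in Q' by move=> jq; rewrite mem_nth ?eQ.
have P'_src j : j < size P -> nth 0 P' j \in P ++ Q.
  by move=> jp; apply: sub; rewrite mem_cat P'_mem.
have Q'_src j : j < size Q -> nth 0 Q' j \in P ++ Q.
  by move=> jq; apply: sub; rewrite mem_cat Q'_mem ?orbT.
have agree j : (j < size P -> nth 0 P' j = nth 0 P j) /\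
             (j < size Q -> nth 0 Q' j = nth 0 Q j).
  elim/ltn_ind: j => j IH.
  have P'j : j < size P -> nth 0 P' j = nth 0 P j.
    move=> jp; apply: inP => //.
    move: (P'_src j jp); rewrite mem_cat => /orP [// | /(nthP 0) [i iq ei]].
    have [lo hi] := P'_win j jp.
    have ij : i.+1 = j by apply: (Q_in_window iq jp); rewrite ei.
    have [_ /(_ iq) Q'i] := IH i ltac:(lia).
    by apply: (proj1 (both _ (P'_mem j jp) _)); rewrite -ei -Q'i Q'_mem.
  split=> // jq; apply: inQ => //.
  move: (Q'_src j jq); rewrite mem_cat => /orP [/(nthP 0) [i ip ei] | //].
  have [lo hi] := Q'_win j jq.
  have ij : i = j by apply: (P_in_cowindow ip jq); rewrite ei.
  rewrite ij in ei; have P'j' := P'j ltac:(lia).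
  by apply: (proj2 (both _ _ (Q'_mem j jq))); rewrite -ei -P'j' P'_mem //; lia.
split; apply: (eq_from_nth (x0:=0)) => // j; rewrite ?eP ?eQ => js.
- exact: (proj1 (agree j)).
- exact: (proj2 (agree j)).
Qed.
End Rigidity.

Lemma special0_strict m' C D : special0 m' (C, D) -> regular (C, D) ->
  (forall j, j < m' -> nth 0 D j < nth 0 C j) /\
  (forall j, j.+1 < m' -> nth 0 C j.+1 < nth 0 D j).
Proof.
move=> [_ [/= zC [/= zD [DC CD]]]] reg; split=> j jm.
- have := regular_nth_neq reg (i:=j) (j:=j); rewrite /= zC zD => /(_ jm jm).
  by have := DC j jm; lia.
- have := regular_nth_neq reg (i:=j.+1) (j:=j); rewrite /= zC zD => /(_ jm (ltnW jm)).
  by have := CD j jm; lia.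
Qed.

Lemma special1_strict m A B : special1 m (A, B) -> regular (A, B) ->
  forall j, j < m -> nth 0 B j < nth 0 A j /\ nth 0 A j.+1 < nth 0 B j.
Proof.
move=> [_ [/= zA [/= zB BA]]] reg j jm; have [BA_j AB_j] := BA j jm.
have := regular_nth_neq reg (i:=j) (j:=j); rewrite /= zA zB => /(_ (ltnW jm) jm).
have := regular_nth_neq reg (i:=j.+1) (j:=j); rewrite /= zA zB => /(_ jm jm).
lia.
Qed.

(* A swap of Z' that still
   interlaces with Z would be a second partner of Z; excluding such swaps
   forces Z to lie strictly below Z' entrywise, and then rigidity pins down
   every partner of Z'. *)
Section PartnersOfZ'.
Variables (m : nat) (A B C D : seq nat).
Hypothesis Z_special : special1 m (A, B).
Hypothesis Z'_special : special0 m.+1 (C, D).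
Hypothesis Z'_regular : regular (C, D).
Hypothesis DZ_single :
  forall L', inD m m.+1 (A, B) (C, D) (A, B) L' <-> L' = (C, D).

Let dA : decreasing A := proj1 (proj1 Z_special).
Let dB : decreasing B := proj2 (proj1 Z_special).
Let zA : size A = m.+1 := proj1 (proj2 Z_special).
Let zB : size B = m := proj1 (proj2 (proj2 Z_special)).
Let dC : decreasing C := proj1 (proj1 Z'_special).
Let dD : decreasing D := proj2 (proj1 Z'_special).
Let zC : size C = m.+1 := proj1 (proj2 Z'_special).
Let zD : size D = m.+1 := proj1 (proj2 (proj2 Z'_special)).

Let ZZ'_in_D : inD m m.+1 (A, B) (C, D) (A, B) (C, D).
Proof. exact/DZ_single. Qed.

Let ZZ'_interlaced : interlaced_succ m A B C D.
Proof. by apply/Bplus_succE => //; case: ZZ'_in_D. Qed.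

Lemma swap_of_Z'_not_partner k l : k <= m -> l <= m ->
  decreasing (swap_entries (C, D) k l).1 ->
  decreasing (swap_entries (C, D) k l).2 ->
  ~ interlaced_succ m A B (swap_entries (C, D) k l).1 (swap_entries (C, D) k l).2.
Proof.
move=> km lm d1 d2 inter.
have [k1 l2] : k < size C /\ l < size D by rewrite zC zD.
apply: (swap_changes Z'_regular k1 l2); apply/DZ_single.
have [_ [SZ [_ dZ']]] := ZZ'_in_D.
split; last split=> //.
  by apply/Bplus_succE; rewrite //= size_set_nth_in.
split; first exact: (swap_in_Sbar (proj1 Z'_special)).
by rewrite defect_swap.
Qed.

(* Swapping C_j with D_j rules out A_j >= C_j. *)
Lemma A_lt_C j : j <= m -> (j < m -> nth 0 B j < nth 0 D j) ->
  nth 0 A j < nth 0 C j.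
Proof.
move=> jm hBD; rewrite ltnNge; apply/negP => hCA.
have [hDA hAD hCB hBC] := ZZ'_interlaced.
have [DC CD] := special0_strict Z'_special Z'_regular.
apply: (swap_of_Z'_not_partner (k:=j) (l:=j)) => //=.
- apply: decreasing_set_nth; rewrite ?zC ?ltnS //.
    move=> j0; have := decreasing_lt dC (i:=j.-1) (j:=j) ltac:(lia) ltac:(lia).
    by have := DC j ltac:(lia); lia.
  by move=> jm'; apply: CD.
- apply: decreasing_set_nth; rewrite ?zD ?ltnS //.
    by move=> j0; have := CD j.-1 ltac:(lia); rewrite prednK.
  move=> jm'; have := decreasing_lt dD (i:=j) (j:=j.+1) ltac:(lia) ltac:(lia).
  by have := DC j ltac:(lia); lia.
- split=> i im; rewrite !nth_set_nth /=.
  + by case: (i =P j) => [ij|_]; [subst i | apply: hDA].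
  + case: (i =P j) => [ij|_]; last exact: hAD.
    by subst i; have := hAD j im; have := DC j ltac:(lia); lia.
  + case: (i.+1 =P j) => [ij|_]; last exact: hCB.
    by subst j; have := hCB i im; have := DC i.+1 ltac:(lia); lia.
  + by case: (i =P j) => [ij|_]; [subst i; apply: hBD | apply: hBC].
Qed.

(* Swapping C_(j+1) with D_j rules out B_j >= D_j once A_(j+1) < C_(j+1). *)
Lemma B_lt_D j : j < m -> nth 0 A j.+1 < nth 0 C j.+1 -> nth 0 B j < nth 0 D j.
Proof.
move=> jm hAC; rewrite ltnNge; apply/negP => hDB.
have [hDA hAD hCB hBC] := ZZ'_interlaced.
have [DC CD] := special0_strict Z'_special Z'_regular.
apply: (swap_of_Z'_not_partner (k:=j.+1) (l:=j)) => //=; try lia.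
- apply: decreasing_set_nth; rewrite ?zC //; first by move=> _; apply: DC; lia.
  move=> jm'; have := decreasing_lt dC (i:=j.+1) (j:=j.+2) ltac:(lia) ltac:(lia).
  by have := CD j ltac:(lia); lia.
- apply: decreasing_set_nth; rewrite ?zD ?ltnS ?(ltnW jm) //; last first.
    by move=> _; apply: DC; lia.
  move=> j0; have := decreasing_lt dD (i:=j.-1) (j:=j) ltac:(lia) ltac:(lia).
  by have := CD j ltac:(lia); lia.
- split=> i im; rewrite !nth_set_nth /=.
  + case: (i =P j) => [ij|_]; last exact: hDA.
    by subst i; have := hDA j ltac:(lia); have := CD j ltac:(lia); lia.
  + by case: (i =P j) => [ij|_]; [subst i | apply: hAD].
  + by case: (i.+1 =P j.+1) => [[ij]|_]; [subst i | apply: hCB].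
  + case: (i =P j.+1) => [ij|_]; last exact: hBC.
    by subst i; have := hBC j.+1 im; have := CD j ltac:(lia); lia.
Qed.

(* Alternating the two exclusions downwards from j = m. *)
Lemma Z_below_Z' :
  (forall j, j <= m -> nth 0 A j < nth 0 C j) /\
  (forall j, j < m -> nth 0 B j < nth 0 D j).
Proof.
have AC k : k <= m -> nth 0 A (m - k) < nth 0 C (m - k).
  elim: k => [|k IH] km; first by apply: A_lt_C; rewrite subn0 ?ltnn.
  apply: A_lt_C; [lia | move=> jm; apply: B_lt_D => //].
  have -> : (m - k.+1).+1 = m - k by lia.
  by apply: IH; lia.
split=> j jm; first by rewrite -(subKn jm); apply: AC; rewrite leq_subr.
by apply: B_lt_D => //; rewrite -(subKn jm); apply: AC; rewrite leq_subr.
Qed.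

Lemma partners_of_Z' L : inD m m.+1 (A, B) (C, D) L (C, D) <-> L = (A, B).
Proof.
split=> [[BL [[SL dL] _]] | ->]; last exact: ZZ'_in_D.
case: L BL SL dL => A' B' BL SL dL.
have [_ [[_ dZ] _]] := ZZ'_in_D.
have [/= zA' zB'] := Sbar_shape SL (etrans dL (esym dZ)).
rewrite /= zA zB in zA' zB'.
have [hDA' hAD' hCB' hBC'] : interlaced_succ m A' B' C D by apply/Bplus_succE.
have [hDA _ hCB _] := ZZ'_interlaced.
have [A_C B_D] := Z_below_Z'.
have [-> ->] // : A' = A /\ B' = B.
apply: (rigidity dA dB dC (X2 := D)); rewrite ?zA ?zB ?zC ?zD ?zA' ?zB' //.
- by move=> j; rewrite ltnS => jm; split; [apply: A_C | apply: hDA].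
- by move=> j jm; split; [apply: B_D | apply: hCB].
- move=> j; rewrite ltnS => jm; split; first exact: hDA'.
  by move=> j0; have := hAD' j.-1; rewrite prednK //; apply; lia.
- by move=> j jm; split; [apply: hCB' | apply: hBC'].
- exact: Sbar_mem SL.
- exact: Sbar_both SL.
Qed.
End PartnersOfZ'.

(* The same argument with the
   roles exchanged: swaps of Z exclude every non-strict inequality, so Z'
   lies strictly below Z, and rigidity pins down every partner of Z. *)
Section PartnersOfZ.
Variables (m : nat) (A B C D : seq nat).
Hypothesis Z_special : special1 m (A, B).
Hypothesis Z'_special : special0 m (C, D).
Hypothesis Z_regular : regular (A, B).
Hypothesis DZ'_single :
  forall L, inD m m (A, B) (C, D) L (C, D) <-> L = (A, B).

Let dA : decreasing A := proj1 (proj1 Z_special).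
Let dB : decreasing B := proj2 (proj1 Z_special).
Let zA : size A = m.+1 := proj1 (proj2 Z_special).
Let zB : size B = m := proj1 (proj2 (proj2 Z_special)).
Let dC : decreasing C := proj1 (proj1 Z'_special).
Let dD : decreasing D := proj2 (proj1 Z'_special).
Let zC : size C = m := proj1 (proj2 Z'_special).
Let zD : size D = m := proj1 (proj2 (proj2 Z'_special)).

Let ZZ'_in_D : inD m m (A, B) (C, D) (A, B) (C, D).
Proof. exact/DZ'_single. Qed.

Let ZZ'_interlaced : interlaced_eq m A B C D.
Proof. by apply/Bplus_eqE => //; case: ZZ'_in_D. Qed.

Lemma swap_of_Z_not_partner k l : k <= m -> l < m ->
  decreasing (swap_entries (A, B) k l).1 ->
  decreasing (swap_entries (A, B) k l).2 ->
  ~ interlaced_eq m (swap_entries (A, B) k l).1 (swap_entries (A, B) k l).2 C D.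
Proof.
move=> km lm d1 d2 inter.
have [k1 l2] : k < size A /\ l < size B by rewrite zA zB.
apply: (swap_changes Z_regular k1 l2); apply/DZ'_single.
have [_ [[SZ dZ] SZ']] := ZZ'_in_D.
split; last split=> //.
  by apply/Bplus_eqE; rewrite //= size_set_nth_in.
split; first exact: (swap_in_Sbar (proj1 Z_special)).
by rewrite defect_swap.
Qed.

(* Swapping A_j with B_j rules out C_j >= A_j once D_j < B_j. *)
Lemma C_lt_A j : j < m -> nth 0 D j < nth 0 B j -> nth 0 C j < nth 0 A j.
Proof.
move=> jm hDB; rewrite ltnNge; apply/negP => hAC.
have [hDA hAD hCB hBC] := ZZ'_interlaced.
have strict := special1_strict Z_special Z_regular.
apply: (swap_of_Z_not_partner (k:=j) (l:=j)); rewrite ?(ltnW jm) //=.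
- apply: decreasing_set_nth; rewrite ?zA ?ltnS ?(ltnW jm) //.
    move=> j0; have := decreasing_lt dA (i:=j.-1) (j:=j) ltac:(lia) ltac:(lia).
    by have := strict j jm; lia.
  by move=> _; have := strict j jm; lia.
- apply: decreasing_set_nth; rewrite ?zB //.
    by move=> j0; have := strict j.-1 ltac:(lia); rewrite prednK //; lia.
  move=> jm'; have := decreasing_lt dB (i:=j) (j:=j.+1) ltac:(lia) ltac:(lia).
  by have := strict j jm; lia.
- split=> i im; rewrite !nth_set_nth /=.
  + by case: (i =P j) => [ij|_]; [subst i | apply: hDA].
  + case: (i.+1 =P j) => [ij|_]; last exact: hAD.
    by subst j; have := hAD i im; have := strict i.+1 jm; lia.
  + case: (i =P j) => [ij|_]; last exact: hCB.
    by subst i; have := hCB j im; have := strict j jm; lia.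
  + by case: (i =P j) => [ij|_]; [subst i | apply: hBC].
Qed.

(* Swapping A_(j+1) with B_j rules out D_j >= B_j once C_(j+1) < A_(j+1). *)
Lemma D_lt_B j : j < m -> (j.+1 < m -> nth 0 C j.+1 < nth 0 A j.+1) ->
  nth 0 D j < nth 0 B j.
Proof.
move=> jm hCA; rewrite ltnNge; apply/negP => hBD.
have [hDA hAD hCB hBC] := ZZ'_interlaced.
have strict := special1_strict Z_special Z_regular.
apply: (swap_of_Z_not_partner (k:=j.+1) (l:=j)) => //=.
- apply: decreasing_set_nth; rewrite ?zA ?ltnS //.
    by move=> _ /=; have := strict j jm; lia.
  move=> jm'; have := decreasing_lt dA (i:=j.+1) (j:=j.+2) ltac:(lia) ltac:(lia).
  by have := strict j jm; lia.
- apply: decreasing_set_nth; rewrite ?zB //.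
    move=> j0; have := decreasing_lt dB (i:=j.-1) (j:=j) ltac:(lia) ltac:(lia).
    by have := strict j jm; lia.
  by move=> jm'; have := strict j.+1 jm'; lia.
- split=> i im; rewrite !nth_set_nth /=.
  + case: (i =P j.+1) => [ij|_]; last exact: hDA.
    by subst i; have := hDA j.+1 im; have := strict j jm; lia.
  + by case: (i.+1 =P j.+1) => [[ij]|_]; [subst i | apply: hAD].
  + by case: (i =P j) => [ij|_]; [subst i; apply: hCA | apply: hCB].
  + case: (i =P j) => [ij|_]; last exact: hBC.
    by subst i; have := hBC j im; have := strict j jm; lia.
Qed.

(* Alternating the two exclusions downwards from j = m - 1. *)
Lemma Z'_below_Z :
  (forall j, j < m -> nth 0 C j < nth 0 A j) /\
  (forall j, j < m -> nth 0 D j < nth 0 B j).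
Proof.
have CA k : k < m -> nth 0 C (m - k.+1) < nth 0 A (m - k.+1).
  elim: k => [|k IH] km; apply: C_lt_A; try lia; apply: D_lt_B; try lia.
  have -> : (m - k.+2).+1 = m - k.+1 by lia.
  by move=> _; apply: IH; lia.
have CA' j : j < m -> nth 0 C j < nth 0 A j.
  by move=> jm; rewrite (_ : j = m - (m - j.+1).+1); [apply: CA | ]; lia.
by split=> // j jm; apply: D_lt_B => // jm'; apply: CA'.
Qed.

Lemma partners_of_Z L' : inD m m (A, B) (C, D) (A, B) L' <-> L' = (C, D).
Proof.
split=> [[BL [_ [SL dL]]] | ->]; last exact: ZZ'_in_D.
case: L' BL SL dL => C' D' BL SL dL.
have [_ [_ [_ dZ']]] := ZZ'_in_D.
have [zC' zD'] := Sbar_shape SL (etrans dL (esym dZ')).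
rewrite /= zC zD in zC' zD'.
have [hDA' hAD' hCB' hBC'] : interlaced_eq m A B C' D' by apply/Bplus_eqE.
have [_ hAD _ hBC] := ZZ'_interlaced.
have [C_A D_B] := Z'_below_Z.
have [-> ->] // : C' = C /\ D' = D.
apply: (rigidity dC dD dA (X2 := B)); rewrite ?zA ?zB ?zC ?zD ?zC' ?zD' //.
- by move=> j jm; split; [apply: C_A | apply: hBC].
- by move=> j jm; split; [apply: D_B | apply: hAD].
- move=> j jm; split; first exact: hBC'.
  by move=> j0; have := hCB' j.-1; rewrite prednK //; apply; lia.
- by move=> j jm; split; [apply: hAD' | apply: hDA'].
- exact: Sbar_mem SL.
- exact: Sbar_both SL.
Qed.
End PartnersOfZ.

Unset Implicit Arguments.

Theorem lemma0805 (m m' : nat) (Z Z' : symbol) :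
  special1 m Z -> special0 m' Z' -> (m' = m \/ m' = m.+1) ->
  (m' = m.+1 -> regular Z' ->
     (forall L', inD m m' Z Z' Z L' <-> L' = Z') ->
     (forall L, inD m m' Z Z' L Z' <-> L = Z)) /\
  (m' = m -> regular Z ->
     (forall L, inD m m' Z Z' L Z' <-> L = Z) ->
     (forall L', inD m m' Z Z' Z L' <-> L' = Z')).
Proof.
case: Z Z' => [A B] [C D] Z_special Z'_special _; split=> e reg single; subst m'.
- exact: partners_of_Z'.
- exact: partners_of_Z.
Qed.
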